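(* Under the standing assumptions, let $u\in X\setminus\{0\}$ and $\zeta\in X^*\setminus\{0\}$ with $\zeta\in\partial J(u)$. Then $g(u,\zeta)=0$ if and only if $u$ is a $p$-eigenvector of $J$ with subgradient $\zeta$ (and eigenvalue $\lambda=R(u)$).
   Context: Standing assumptions: $X$ is a real reflexive Banach space with dual $X^*$ and duality pairing $\langle\cdot,\cdot\rangle$; $\Gamma_0(X)$ is the class of proper, lower semi-continuous, convex functionals $X\to\mathbb{R}\cup\{+\infty\}$. Fix $1<p<\infty$ and $q=\frac{p}{p-1}$. Let $J\in\Gamma_0(X)$, and let $H\in\Gamma_0(X)$ be absolutely $p$-homogeneous ($H(tu)=|t|^pH(u)$) such that $|u|_H:=(pH(u))^{1/p}$ is a norm on $X$, so $H(u)=\frac1p|u|_H^p$. The dual norm is $|\zeta|_{H^*}=\sup_{u\ne0}\langle\zeta,u\rangle/|u|_H$, and $H^*(\zeta)=\frac1q|\zeta|_{H^*}^q$. The Fenchel conjugate is $J^*(\zeta)=\sup_{u\in X}\langle\zeta,u\rangle-J(u)$ and the subdifferential is $\partial J(u)=\{\zeta\in X^*:\ J(u)+\langle\zeta,v-u\rangle\le J(v)\ \forall v\in X\}$. Growth assumption: there is $c>0$ with $H(u)\le cJ(u)$ for all $u\in X$. The Rayleigh quotient is $R(u)=J(u)/H(u)$ for $u\ne0$ and the dual Rayleigh quotient is $R_*(\zeta)=J^*(\zeta)/H^*(\zeta)$ for $\zeta\ne0$. The duality gap is $g(u,\zeta)=R(u)^{-1/p}-\operatorname{sign}(J^*(\zeta))\,|R_*(\zeta)|^{1/q}$.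 A $p$-eigenvector of $J$: $u\in X\setminus\{0\}$ with subgradient $\zeta\in\partial J(u)$ and eigenvalue $\lambda=R(u)\in\mathbb{R}$ such that $\zeta\in\lambda\,\partial H(u)$. *)

From HB Require Import structures.
From mathcomp Require Import all_boot all_order all_algebra.
From mathcomp Require Import all_classical all_reals all_analysis.
Set Implicit Arguments. Unset Strict Implicit. Unset Printing Implicit Defensive.
Import Order.TTheory GRing.Theory Num.Theory.
Import numFieldNormedType.Exports.
Local Open Scope classical_set_scope.
Local Open Scope ring_scope.

Section Defs.
Context {R : realType} {X : normedModType R}.

(* elements of the topological dual X^* : continuous linear functionals;
   the duality pairing <zeta, u> is application zeta u *)
Definition is_dual (zeta : X -> R) : Prop :=
  (forall (a : R) (x y : X), zeta (a *: x + y) = a * zeta x + zeta y)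
  /\ continuous zeta.

Definition dual_norm (zeta : X -> R) : \bar R :=
  ereal_sup [set (`|zeta x|)%:E | x in [set x : X | `|x| <= 1]].

Definition reflexive_space : Prop :=
  forall Phi : (X -> R) -> R,
    (forall (a : R) (z1 z2 : X -> R), is_dual z1 -> is_dual z2 ->
        Phi (fun x => a * z1 x + z2 x) = a * Phi z1 + Phi z2) ->
    (exists C : R, forall z, is_dual z ->
        ((`|Phi z|)%:E <= C%:E * dual_norm z)%E) ->
    exists x : X, forall z, is_dual z -> Phi z = z x.

Definition proper_fun (J : X -> \bar R) : Prop :=
  (exists x, (J x < +oo)%E) /\ (forall x, (-oo < J x)%E).

Definition convex_efun (J : X -> \bar R) : Prop :=
  forall (x y : X) (t : R), 0 < t < 1 ->
    (J (t *: x + (1 - t) *: y)%R <= t%:E * J x + (1 - t)%:E * J y)%E.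

Definition Gamma0 (J : X -> \bar R) : Prop :=
  proper_fun J /\ lower_semicontinuous J /\ convex_efun J.

Definition fconj (J : X -> \bar R) (zeta : X -> R) : \bar R :=
  ereal_sup [set ((zeta u)%:E - J u)%E | u in [set: X]].

Definition subdiff (J : X -> \bar R) (u : X) : set (X -> R) :=
  [set zeta | is_dual zeta /\
     forall v : X, (J u + (zeta (v - u)%R)%:E <= J v)%E].

Definition is_norm (N : X -> R) : Prop :=
  (forall x, N x = 0 -> x = 0) /\
  (forall (t : R) x, N (t *: x) = `|t| * N x) /\
  (forall x y, N (x + y) <= N x + N y).

Definition Hnorm (p : R) (H : X -> \bar R) (u : X) : R :=
  powR (p * fine (H u)) p^-1.

Definition rayleigh (J H : X -> \bar R) (u : X) : \bar R :=
  (J u * ((fine (H u))^-1)%:E)%E.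

Definition rayleigh_dual (J H : X -> \bar R) (zeta : X -> R) : \bar R :=
  (fconj J zeta * inve (fconj H zeta))%E.

Definition sgnE (x : \bar R) : R :=
  match x with
  | r%:E => Num.sg r
  | +oo%E => 1
  | -oo%E => -1
  end.

Definition duality_gap (p : R) (J H : X -> \bar R) (u : X) (zeta : X -> R)
    : \bar R :=
  let q := p / (p - 1) in
  (poweR (rayleigh J H u) (- p^-1)
   - (sgnE (fconj J zeta))%:E * poweR (abse (rayleigh_dual J H zeta)) q^-1)%E.

Definition p_eigenvector (J H : X -> \bar R) (u : X) (zeta : X -> R) : Prop :=
  u <> 0 /\ subdiff J u zeta /\
  exists lambda : R, rayleigh J H u = lambda%:E /\
    exists eta, subdiff H u eta /\ zeta = (fun x => lambda * eta x).

End Defs.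

From HB Require Import structures.
From mathcomp Require Import all_boot all_order all_algebra.
From mathcomp Require Import all_classical all_reals all_analysis.
From mathcomp Require Import ring lra.
Set Implicit Arguments. Unset Strict Implicit. Unset Printing Implicit Defensive.
Import Order.TTheory GRing.Theory Num.Theory.
Import numFieldNormedType.Exports.
Local Open Scope classical_set_scope.
Local Open Scope ring_scope.

(* Write J(u) = lam H(u) with lam = R(u), and let mu = lam^(1/(p-1)), so that
   lam^(-1/p) = mu^(-1/q).  The Fenchel-Young equality at the subgradient gives
   J^*(zeta) = phi(u) with phi = zeta - lam H, and substituting v := mu v in the
   definition of H^* gives, by p-homogeneity, H^*(zeta) = mu sup phi.  Hence the
   gap vanishes iff phi(u) = sup phi, i.e. iff u maximises zeta - lam H, which
   says exactly that zeta / lam is a subgradient of H at u. *)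

Section dual_functional.
Context {R : realType} {X : normedModType R}.
Variable z : X -> R.
Hypothesis z_dual : is_dual z.

Lemma dual0 : z 0 = 0.
Proof. by have := z_dual.1 1 0 0; rewrite scale1r addr0 mul1r; lra. Qed.

Lemma dualZ a x : z (a *: x) = a * z x.
Proof. by have := z_dual.1 a x 0; rewrite addr0 dual0 addr0. Qed.

Lemma dualB x y : z (x - y) = z x - z y.
Proof. by have := z_dual.1 (-1) y x; rewrite scaleN1r addrC => ->; ring. Qed.

Lemma dual_scale a : is_dual (fun x => a * z x).
Proof.
split=> [b x y|x]; first by rewrite z_dual.1; ring.
exact: continuousM (@cst_continuous _ _ _ x) (z_dual.2 x).
Qed.

Lemma dual_neq0_gt0 : z <> (fun=> 0) -> exists w, 0 < z w.
Proof.
move=> z_neq0; apply: contrapT => z_le0; apply: z_neq0; apply/funext => x.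
have [x_lt0|x_gt0|//] := ltgtP (z x) 0; exfalso; apply: z_le0.
- by exists (- x); rewrite -scaleN1r dualZ; lra.
- by exists x.
Qed.

End dual_functional.

Lemma ereal_sup_range_eqP {R : realType} {T : Type} (f : T -> \bar R) u :
  ereal_sup (range f) = f u <-> forall v, (f v <= f u)%E.
Proof.
split=> [<- v|f_le]; first by apply: ereal_sup_ubound; exists v.
apply/eqP; rewrite eq_le; apply/andP; split; last by apply: ereal_sup_ubound; exists u.
by apply: ge_ereal_sup => _ [v _ <-].
Qed.

Section subdifferential.
Context {R : realType} {X : normedModType R}.
Implicit Types (J : X -> \bar R) (z : X -> R).

Lemma subdiff_fin_num J u z : proper_fun J -> subdiff J u z -> J u \is a fin_num.
Proof.
case=> -[x Jx_lt] J_gtNy [_ z_sub]; rewrite fin_numElt J_gtNy /=.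
rewrite ltey; apply/negP => /eqP Ju.
by move: Jx_lt; have := z_sub x; rewrite Ju /= leye_eq => /eqP ->.
Qed.

Lemma fconj_subdiff J u z : J u \is a fin_num -> subdiff J u z ->
  fconj J z = ((z u)%:E - J u)%E.
Proof.
move=> /fineK Ju [z_dual z_sub].
apply/(ereal_sup_range_eqP (fun v => (z v)%:E - J v)%E) => v.
move: (z_sub v); rewrite -Ju dualB //.
case: (J v) => [r||] /=; rewrite ?leeNy_eq ?leey ?addeNy ?leNye //.
by rewrite -!EFinB -EFinD !lee_fin; lra.
Qed.

Lemma subdiff_scaleP (h : X -> R) u z (lam : R) : 0 < lam -> is_dual z ->
  (exists eta, subdiff (EFin \o h) u eta /\ z = (fun x => lam * eta x)) <->
  (forall v, z v - lam * h v <= z u - lam * h u).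
Proof.
move=> lam_gt0 z_dual; split=> [[eta [[eta_dual eta_sub] ->]] v|z_max].
  have := eta_sub v; rewrite /= -EFinD lee_fin dualB // => eta_le.
  by rewrite -!mulrBr ler_pM2l //; lra.
exists (fun x => lam^-1 * z x); split; last first.
  by apply/funext => x; rewrite mulrA mulfV ?mul1r ?gt_eqF.
split=> [|v]; first exact: dual_scale.
rewrite /= -EFinD lee_fin dualB // -(ler_pM2l lam_gt0) mulrDr mulrA.
by rewrite mulfV ?gt_eqF // mul1r; have := z_max v; lra.
Qed.

End subdifferential.

Lemma powR_invK {R : realType} (a r : R) : 0 <= a -> r != 0 -> powR (powR a r^-1) r = a.
Proof. by move=> a_ge0 r_neq0; rewrite -powRrM mulVf ?powRr1. Qed.

Lemma powR_subr1 {R : realType} (t r : R) : 0 < t -> powR t r = powR t (r - 1) * t.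
Proof.
move=> t_gt0; rewrite -{3}(powRr1 (ltW t_gt0)) -powRD ?subrK //.
by rewrite (gt_eqF t_gt0) implybT.
Qed.

Section homogeneous.
Context {R : realType} {X : normedModType R}.
Variables (p : R) (h : X -> R).
Hypotheses (p_gt1 : 1 < p) (hZ : forall t v, h (t *: v) = powR `|t| p * h v).

Let p_gt0 : 0 < p := lt_trans ltr01 p_gt1.

Lemma homog0 : h 0 = 0.
Proof. by have := hZ 0 0; rewrite scale0r normr0 powR0 ?mul0r ?gt_eqF. Qed.

Lemma homog_ge0 v : convex_efun (EFin \o h) -> 0 <= h v.
Proof.
move=> h_cvx; have /= := h_cvx v (- v) 2^-1.
have -> : 1 - 2^-1 = 2^-1 :> R by field.
rewrite scalerN subrr homog0 -scaleN1r hZ normrN normr1 powR1 -!EFinM -EFinD lee_fin.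
by move=> /(_ _)/implyP; lra.
Qed.

Lemma homog_gt0 v : convex_efun (EFin \o h) -> is_norm (Hnorm p (EFin \o h)) ->
  v != 0 -> 0 < h v.
Proof.
move=> h_cvx [h_def _] v_neq0; rewrite lt_neqAle homog_ge0 // andbT.
apply: contra v_neq0 => /eqP hv0; apply/eqP/h_def.
by rewrite /Hnorm /= -hv0 mulr0 powR0 // invr_eq0 gt_eqF.
Qed.

Lemma homog_dual_gt z : is_dual z -> z <> (fun=> 0) -> exists v, 0 < z v - h v.
Proof.
move=> z_dual /(dual_neq0_gt0 z_dual) [w zw_gt0].
have [hw_le0|hw_gt0] := lerP (h w) 0; first by exists w; lra.
have p1_neq0 : p - 1 != 0 by rewrite subr_eq0 gt_eqF.
pose t := powR (z w / (2 * h w)) (p - 1)^-1.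
have t_gt0 : 0 < t by apply: powR_gt0; apply: divr_gt0 => //; lra.
exists (t *: w); rewrite dualZ // hZ gtr0_norm // powR_subr1 // powR_invK //; last first.
  by apply: divr_ge0; lra.
have -> : z w / (2 * h w) * t * h w = t * z w / 2 by field; lra.
by have := mulr_gt0 t_gt0 zw_gt0; lra.
Qed.

Lemma fconj_homog z mu : is_dual z -> 0 < mu ->
  fconj (EFin \o h) z = (mu%:E * fconj (fun v => (powR mu (p - 1) * h v)%:E) z)%E.
Proof.
move=> z_dual mu_gt0; rewrite /fconj -ereal_sup_pZl // image_comp; congr ereal_sup.
have scale v : ((z (mu *: v))%:E - (h (mu *: v))%:E =
    mu%:E * ((z v)%:E - (powR mu (p - 1) * h v)%:E))%E.
  by rewrite -!EFinB -EFinM dualZ // hZ gtr0_norm // powR_subr1 //; congr EFin; ring.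
apply/seteqP; split=> _ [v _ <-] /=; last by exists (mu *: v).
by exists (mu^-1 *: v) => //; rewrite -scale scalerA mulfV ?gt_eqF ?scale1r.
Qed.

End homogeneous.

Lemma gap_eq0P {R : realType} (mu qi x : R) (s : \bar R) :
  0 < mu -> qi != 0 -> (0 < s)%E -> (x%:E <= s)%E ->
  ((powR mu (- qi))%:E - (Num.sg x)%:E * poweR (abse (x%:E * inve (mu%:E * s))) qi = 0
    <-> x%:E = s)%E.
Proof.
move=> mu_gt0 qi_neq0 s_gt0 x_le_s; have a_gt0 := powR_gt0 (- qi) mu_gt0.
case: s s_gt0 x_le_s => [r||] // r_gt0 x_le_r; last first.
  rewrite gt0_muley ?lte_fin // invey mule0 abse0 poweR0r // mule0 sube0.
  by split=> // -[] /eqP; rewrite gt_eqF.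
rewrite lte_fin in r_gt0; rewrite lee_fin in x_le_r.
rewrite -EFinM inver mulf_eq0 !gt_eqF //= -EFinD.
have [x_le0|x_gt0] := lerP x 0.
  have sg_le0 : Num.sg x <= 0 by rewrite sgr_le0.
  by have := powR_ge0 `|x / (mu * r)| qi; split=> -[] ?; exfalso; nra.
rewrite gtr0_sg // mul1r ger0_norm ?divr_ge0 ?mulr_ge0 ?ltW //.
have -> : x / (mu * r) = x / r * mu^-1 by field; rewrite !gt_eqF.
rewrite powRM ?invr_ge0 ?divr_ge0 ?ltW // -(powR_inv1 (ltW mu_gt0)) -powRrM mulN1r.
rewrite -{1}[powR mu (- qi)]mul1r -mulrBl.
split=> [[] /eqP|[->]]; last by rewrite divff ?gt_eqF // powR1 subrr mul0r.
rewrite mulf_eq0 (gt_eqF a_gt0) orbF subr_eq0 eq_sym powR_eq1 (negPf qi_neq0).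
rewrite ltNge divr_ge0 ?ltW //= !orbF => /eqP xr1.
by rewrite -(divfK (lt0r_neq0 r_gt0) x) xr1 mul1r.
Qed.

Section duality_gap.
Context {R : realType} {X : normedModType R}.
Variables (p lam : R) (J : X -> \bar R) (h : X -> R) (u : X) (zeta : X -> R).
Hypotheses (p_gt1 : 1 < p) (hZ : forall t v, h (t *: v) = powR `|t| p * h v).
Hypotheses (zeta_dual : is_dual zeta) (zeta_neq0 : zeta <> (fun=> 0)).
Hypotheses (u_neq0 : u <> 0) (hu_gt0 : 0 < h u) (zeta_sub : subdiff J u zeta).
Hypotheses (lam_gt0 : 0 < lam) (Ju : J u = (lam * h u)%:E).

Let mu := powR lam (p - 1)^-1.
Let qi := (p / (p - 1))^-1.
Let G v := (lam * h v)%:E.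

Let p_gt0 : 0 < p := lt_trans ltr01 p_gt1.
Let p1_neq0 : p - 1 != 0. Proof. by rewrite subr_eq0 gt_eqF. Qed.
Let mu_gt0 : 0 < mu. Proof. exact: powR_gt0. Qed.

Lemma rayleighE : rayleigh J (EFin \o h) u = lam%:E.
Proof. by rewrite /rayleigh Ju /= -EFinM mulfK ?gt_eqF. Qed.

Lemma p_eigenvectorE : p_eigenvector J (EFin \o h) u zeta <->
  forall v, zeta v - lam * h v <= zeta u - lam * h u.
Proof.
rewrite -(subdiff_scaleP _ _ lam_gt0 zeta_dual) /p_eigenvector rayleighE.
split=> [[_ [_ [l [[<-] //]]]]|eta_ex].
by split=> //; split=> //; exists lam.
Qed.

Let phiu_le : ((zeta u - lam * h u)%:E <= fconj G zeta)%E.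
Proof. by apply: ereal_sup_ubound; exists u; rewrite ?EFinB. Qed.

Let fconjG_gt0 : (0 < fconj G zeta)%E.
Proof.
have lamhZ t v : lam * h (t *: v) = powR `|t| p * (lam * h v) by rewrite hZ; ring.
have [v phiv_gt0] := homog_dual_gt p_gt1 lamhZ zeta_dual zeta_neq0.
have : ((zeta v)%:E - G v <= fconj G zeta)%E by apply: ereal_sup_ubound; exists v.
by apply: lt_le_trans; rewrite -EFinB lte_fin.
Qed.

Let fconjG_attainedP : (zeta u - lam * h u)%:E = fconj G zeta <->
  forall v, zeta v - lam * h v <= zeta u - lam * h u.
Proof.
pose phi v := ((zeta v)%:E - G v)%E.
rewrite EFinB; split=> [/esym/(ereal_sup_range_eqP phi) phi_le v|phi_le].
  by have := phi_le v; rewrite /phi -!EFinB lee_fin.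
by apply/esym/(ereal_sup_range_eqP phi) => v; rewrite /phi -!EFinB lee_fin.
Qed.

Let duality_gapE : duality_gap p J (EFin \o h) u zeta = ((powR mu (- qi))%:E -
  (Num.sg (zeta u - lam * h u))%:E *
  poweR (abse ((zeta u - lam * h u)%:E * inve (mu%:E * fconj G zeta))) qi)%E.
Proof.
rewrite /duality_gap /rayleigh_dual rayleighE (fconj_subdiff _ zeta_sub) ?Ju //=.
have mu_lam : powR mu (p - 1) = lam by rewrite powR_invK ?ltW.
rewrite (fconj_homog hZ zeta_dual mu_gt0) mu_lam -EFinD /mu -powRrM; do 3 f_equal.
by rewrite /qi; field; rewrite p1_neq0 gt_eqF.
Qed.

Lemma duality_gap_eq0P : duality_gap p J (EFin \o h) u zeta = 0%E <->
  forall v, zeta v - lam * h v <= zeta u - lam * h u.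
Proof.
have qi_neq0 : qi != 0 by rewrite invr_eq0 mulf_eq0 invr_eq0 (negPf p1_neq0) gt_eqF.
rewrite duality_gapE; apply: iff_trans (gap_eq0P mu_gt0 qi_neq0 fconjG_gt0 phiu_le) _.
exact: fconjG_attainedP.
Qed.

End duality_gap.

Theorem proposition2p7 (R : realType) (X : completeNormedModType R)
  (p : R) (J H : X -> \bar R) :
  reflexive_space (X := X) ->
  1 < p ->
  Gamma0 J ->
  Gamma0 H ->
  (forall (t : R) (u : X), H (t *: u) = ((powR `|t| p)%:E * H u)%E) ->
  (forall u : X, H u \is a fin_num) ->
  is_norm (Hnorm p H) ->
  (exists2 c : R, 0 < c & forall u : X, (H u <= c%:E * J u)%E) ->
  forall (u : X) (zeta : X -> R),
    u <> 0 -> is_dual zeta -> zeta <> (fun _ => 0) ->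
    subdiff J u zeta ->
    (duality_gap p J H u zeta = 0%E <-> p_eigenvector J H u zeta).
Proof.
move=> _ p_gt1 [J_proper _] [_ [_ H_cvx]] HZ H_fin H_norm [c c_gt0 H_le_J] u zeta.
move=> u_neq0 zeta_dual zeta_neq0 zeta_sub.
have [h HE] : exists h : X -> R, H = EFin \o h.
  by exists (fine \o H); apply/funext => v /=; rewrite fineK.
subst H.
have hZ t v : h (t *: v) = powR `|t| p * h v by have /= := HZ t v; rewrite -EFinM => -[].
have hu_gt0 : 0 < h u by apply: (homog_gt0 p_gt1 hZ) => //; apply/eqP.
pose lam := fine (J u) / h u.
have Ju : J u = (lam * h u)%:E.
  by rewrite divfK ?gt_eqF // fineK // (subdiff_fin_num J_proper zeta_sub).
have lam_gt0 : 0 < lam.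
  have := H_le_J u; rewrite Ju /= -EFinM lee_fin mulrA -{1}[h u]mul1r ler_pM2r //.
  by move/(lt_le_trans ltr01); rewrite pmulr_rgt0.
have gapP := duality_gap_eq0P p_gt1 hZ zeta_dual zeta_neq0 hu_gt0 zeta_sub lam_gt0 Ju.
have eigenP := p_eigenvectorE zeta_dual u_neq0 hu_gt0 zeta_sub lam_gt0 Ju.
exact: iff_trans gapP (iff_sym eigenP).
Qed.
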